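(* Let $h\in\mathbb{F}[x]$ with $\deg h\ge1$. Then: (i) every $\omega\in\mathrm{Aut}_{\mathbb{F}}(A_h)$ can be written $\omega=\phi_f\circ\tau_{\alpha,\beta}$ for some $(\alpha,\beta)\in\mathbb{P}$ and $f\in\mathbb{F}[x]$; (ii) for $(\alpha,\beta)\in\mathbb{P}$ and $f\in\mathbb{F}[x]$, $\tau_{\alpha,\beta}=\phi_f$ if and only if $\alpha=1$, $\beta=0$ and $f=0$; (iii) if $(\alpha,\beta)\in\mathbb{P}$, $\alpha\ne1$ and $\alpha^\ell=1$ for some $\ell\ge2$, then $\tau_{\alpha,\beta}^\ell=\mathrm{id}_{A_h}$; (iv) the abelian group $\{\phi_f: f\in\mathbb{F}[x]\}$, isomorphic to $(\mathbb{F}[x],+)$ via $f\mapsto\phi_f$, is a normal subgroup of $\mathrm{Aut}_{\mathbb{F}}(A_h)$; (v) $\tau_{\mathbb{P}}=\{\tau_{\alpha,\beta}:(\alpha,\beta)\in\mathbb{P}\}$ is a subgroup of $\mathrm{Aut}_{\mathbb{F}}(A_h)$ and $\mathrm{Aut}_{\mathbb{F}}(A_h)=\{\phi_f:f\in\mathbb{F}[x]\}\rtimes\tau_{\mathbb{P}}$.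
   Context: $\mathbb{F}$ is an arbitrary field. For $h\in\mathbb{F}[x]$, $A_h$ is the unital associative $\mathbb{F}$-algebra generated by $x,\hat y$ with defining relation $\hat yx-x\hat y=h$. Let $\mathbb{P}=\{(\alpha,\beta)\in\mathbb{F}^*\times\mathbb{F}: h(\alpha x+\beta)=\alpha^{\deg h}h(x)\}$. For $(\alpha,\beta)\in\mathbb{P}$, $\tau_{\alpha,\beta}$ is the automorphism of $A_h$ with $\tau_{\alpha,\beta}(x)=\alpha x+\beta$, $\tau_{\alpha,\beta}(\hat y)=\alpha^{\deg h-1}\hat y$. For $f\in\mathbb{F}[x]$, $\phi_f$ is the automorphism with $\phi_f(x)=x$, $\phi_f(\hat y)=\hat y+f$. *)

From HB Require Import structures.
From mathcomp Require Import all_boot all_order all_algebra.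
From Stdlib Require Import ClassicalEpsilon.
Set Implicit Arguments. Unset Strict Implicit. Unset Printing Implicit Defensive.
Import GRing.Theory.
Local Open Scope ring_scope.

Section Ah.
Variable F : fieldType.

Definition polA (A : algType F) (p : {poly F}) (a : A) : A :=
  (map_poly (in_alg A) p).[a].

Definition alg_hom (A B : algType F) (g : A -> B) : Prop :=
  (forall (k : F) (u v : A), g (k *: u + v) = k *: g u + g v) /\
  g 1 = 1 /\ (forall u v : A, g (u * v) = g u * g v).

Definition alg_aut (A : algType F) (g : A -> A) : Prop :=
  alg_hom g /\ bijective g.

(* (A, X, Y) is a presentation of A_h: generated by X, Y subject only to
   Y X - X Y = h(X), expressed by the universal property. *)
Definition is_Ah (h : {poly F}) (A : algType F) (X Y : A) : Prop :=
  Y * X - X * Y = polA h X /\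
  forall (B : algType F) (a b : B), b * a - a * b = polA h a ->
    (exists g : A -> B, alg_hom g /\ g X = a /\ g Y = b) /\
    (forall g1 g2 : A -> B, alg_hom g1 -> alg_hom g2 ->
       g1 X = a -> g1 Y = b -> g2 X = a -> g2 Y = b -> g1 =1 g2).

Definition degp (h : {poly F}) : nat := (size h).-1.

Definition inP (h : {poly F}) (alpha beta : F) : Prop :=
  alpha != 0 /\ h \Po (alpha *: 'X + beta%:P) = alpha ^+ degp h *: h.

Definition phi (A : algType F) (X Y : A) (f : {poly F}) : A -> A :=
  epsilon (inhabits id)
    (fun g => alg_hom g /\ g X = X /\ g Y = Y + polA f X).

Definition tau (h : {poly F}) (A : algType F) (X Y : A) (alpha beta : F)
  : A -> A :=
  epsilon (inhabits id)
    (fun g => alg_hom g /\ g X = alpha *: X + beta%:A /\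
              g Y = alpha ^+ (degp h).-1 *: Y).

End Ah.

From HB Require Import structures.
From mathcomp Require Import all_boot all_order all_algebra.
From mathcomp Require Import boolp ring zify.
From Stdlib Require Import ClassicalEpsilon FunctionalExtensionality ProofIrrelevance.
Set Implicit Arguments. Unset Strict Implicit. Unset Printing Implicit Defensive.
Import GRing.Theory.
Local Open Scope ring_scope.

(* A_h is only given by its universal property, so we first construct a
   normal form.  The representation rho of A_h on F[x][y] (X acting by
   multiplication by x, Y by q |-> y q + h(x) dq/dx), combined with a
   shearing argument, shows that every a in A_h equals sum_j p_j(X) Y^j for
   p = coords a := rho(a)(1), and that the y-degree is additive under
   multiplication.  Hence A_h is a domain whose units are the scalars,
   generated by F[X] and Y, in which every commutator lies in h(X) A_h.

   For an automorphism w this forces h(w X) to be a nonzero multiple of h(X),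
   so w X = aX + b with (a, b) in P, and a y-degree count then gives
   w Y = a^(d-1) Y + c(X): this is part (i).  The other parts are group laws
   for phi and tau, each verified on the generators X, Y through the
   uniqueness half of the universal property. *)

Lemma size_sum_dominant (R : nzSemiRingType) (r : nat -> {poly R}) n :
  r n != 0 -> (forall j, (j < n)%N -> (size (r j) < size (r n))%N) ->
  size (\sum_(j < n.+1) r j) = size (r n) /\
  lead_coef (\sum_(j < n.+1) r j) = lead_coef (r n).
Proof.
move=> rn0 dominant; rewrite big_ord_recr /= addrC.
have lt_rest : (size (\sum_(j < n) r j)%R < size (r n))%N.
  rewrite -(prednK (_ : 0 < size (r n))%N) ?size_poly_gt0 // ltnS.
  apply: leq_trans (size_sum _ _ _) _; apply/bigmax_leqP => j _.
  by rewrite -ltnS prednK ?size_poly_gt0 // dominant.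
by rewrite size_polyDl // lead_coefDl.
Qed.

Lemma size_Cmul_leq (R : nzSemiRingType) (c : R) (p : {poly R}) :
  (size (c%:P * p)%R <= size p)%N.
Proof. by rewrite mul_polyC size_scale_leq. Qed.

Section PolynomialEvaluation.
Variables (F : fieldType) (B : algType F).
Implicit Types (p q : {poly F}) (a : B).

Lemma polAE p a : polA p a = horner_alg a p. Proof. by []. Qed.

Lemma polAD p q a : polA (p + q) a = polA p a + polA q a.
Proof. by rewrite !polAE rmorphD. Qed.
Lemma polAM p q a : polA (p * q) a = polA p a * polA q a.
Proof. by rewrite !polAE rmorphM. Qed.
Lemma polAC c a : polA c%:P a = c%:A.
Proof. by rewrite polAE horner_algC. Qed.
Lemma polAZ c p a : polA (c *: p) a = c *: polA p a.
Proof. by rewrite -mul_polyC polAM polAC mulr_algl. Qed.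
Lemma polAX a : polA 'X a = a.
Proof. by rewrite polAE horner_algX. Qed.
Lemma polA0 a : polA 0 a = 0.
Proof. by rewrite polAE rmorph0. Qed.
Lemma polA1 a : polA 1 a = 1.
Proof. by rewrite polAE rmorph1. Qed.
Lemma polAXn p a n : polA (p ^+ n) a = polA p a ^+ n.
Proof. by rewrite !polAE rmorphXn. Qed.
Lemma polA_sum n (P : 'I_n -> {poly F}) a :
  polA (\sum_(i < n) P i) a = \sum_(i < n) polA (P i) a.
Proof. by rewrite polAE rmorph_sum. Qed.

Lemma polA_comm2 p q a : polA p a * polA q a = polA q a * polA p a.
Proof. by rewrite -!polAM mulrC. Qed.
Lemma polA_comm p a : polA p a * a = a * polA p a.
Proof. by have := polA_comm2 p 'X a; rewrite polAX. Qed.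

Lemma polA_comp p q a : polA (p \Po q) a = polA p (polA q a).
Proof.
elim/poly_ind: p => [|p c IH]; first by rewrite comp_poly0 !polA0.
by rewrite comp_polyD comp_polyM comp_polyX comp_polyC !polAD !polAM polAX !polAC IH.
Qed.

Lemma polA_coef p a : polA p a = \sum_(i < size p) p`_i *: a ^+ i.
Proof.
rewrite /polA horner_coef size_map_poly; apply: eq_bigr => i _.
by rewrite coef_map /= mulr_algl.
Qed.

End PolynomialEvaluation.

Section AlgebraHomomorphisms.
Variables (F : fieldType) (B C : algType F) (g : B -> C).
Hypothesis hg : alg_hom g.

Lemma homD u v : g (u + v) = g u + g v.
Proof. by have := hg.1 1 u v; rewrite !scale1r. Qed.
Lemma hom0 : g 0 = 0.
Proof. by apply: (addIr (g 0)); rewrite -homD !add0r. Qed.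
Lemma homZ k u : g (k *: u) = k *: g u.
Proof. by rewrite -[k *: u]addr0 hg.1 hom0 addr0. Qed.
Lemma homB u v : g (u - v) = g u - g v.
Proof. by rewrite homD -scaleN1r homZ scaleN1r. Qed.
Lemma homM u v : g (u * v) = g u * g v.
Proof. exact: hg.2.2. Qed.
Lemma hom1 : g 1 = 1.
Proof. exact: hg.2.1. Qed.
Lemma homA k : g k%:A = k%:A.
Proof. by rewrite homZ hom1. Qed.
Lemma homX u n : g (u ^+ n) = g u ^+ n.
Proof. by elim: n => [|n IH]; rewrite ?expr0 ?hom1 // !exprS homM IH. Qed.
Lemma hom_sum n (P : 'I_n -> B) : g (\sum_(i < n) P i) = \sum_(i < n) g (P i).
Proof.
elim: n P => [|n IH] P; first by rewrite !big_ord0 hom0.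
by rewrite !big_ord_recr /= homD IH.
Qed.
Lemma hom_polA p a : g (polA p a) = polA p (g a).
Proof.
elim/poly_ind: p => [|p c IH]; first by rewrite !polA0 hom0.
by rewrite !polAD !polAM !polAX !polAC homD homM IH homA.
Qed.

End AlgebraHomomorphisms.

Lemma hom_comp (F : fieldType) (B C D : algType F) (g1 : C -> D) (g2 : B -> C) :
  alg_hom g1 -> alg_hom g2 -> alg_hom (g1 \o g2).
Proof.
move=> h1 h2; split; [|split] => /=.
- by move=> k u v; rewrite h2.1 h1.1.
- by rewrite !hom1.
- by move=> u v; rewrite !homM.
Qed.

Lemma hom_id (F : fieldType) (B : algType F) : alg_hom (@id B).
Proof. by []. Qed.

Lemma aut_inv (F : fieldType) (B : algType F) (w : B -> B) : alg_aut w ->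
  exists w', alg_hom w' /\ cancel w w' /\ cancel w' w.
Proof.
move=> [hw [w' K1 K2]]; exists w'; split => //; split; [|split].
- by move=> k u v; apply: (can_inj K1); rewrite K2 hw.1 !K2.
- by apply: (can_inj K1); rewrite K2 (hom1 hw).
- by move=> u v; apply: (can_inj K1); rewrite K2 (homM hw) !K2.
Qed.

(* This
   algebra (of a possibly infinite-dimensional W) is the target of the
   representations used below to get a normal form in A_h. *)
Section LinearEndomorphisms.
Variables (F : fieldType) (W : lmodType F).

Definition is_linear_map (f : W -> W) :=
  forall (k : F) (u v : W), f (k *: u + v) = k *: f u + f v.

Record linear_map := LinearMap { lmap_app :> W -> W; lmap_lin : is_linear_map lmap_app }.

Lemma lmap_ext (f g : linear_map) : f =1 g -> f = g.
Proof.
case: f g => f hf [g hg] /= E.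
have Efg : f = g by apply: functional_extensionality.
by subst g; rewrite (proof_irrelevance _ hf hg).
Qed.

Lemma lmapD (f : linear_map) u v : f (u + v) = f u + f v.
Proof. by have := lmap_lin f 1 u v; rewrite !scale1r. Qed.
Lemma lmap0 (f : linear_map) : f 0 = 0.
Proof. by apply: (addIr (f 0)); rewrite -lmapD !add0r. Qed.
Lemma lmapZ (f : linear_map) k u : f (k *: u) = k *: f u.
Proof. by rewrite -[k *: u]addr0 lmap_lin lmap0 addr0. Qed.

Variable w0 : W.
Hypothesis w0_neq0 : w0 != 0.

(* The type [End_alg w0_neq0] carries the algebra structure; the proof
   argument only records that W is nonzero, so that 1 != 0. *)
Definition End_alg of w0 != 0 := linear_map.
Local Notation E := (End_alg w0_neq0).

Definition lmap_zero : E := @LinearMap (fun _ => 0)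
  (fun k u v => ltac:(by rewrite /= scaler0 addr0)).
Definition lmap_add (f g : E) : E := @LinearMap (fun w => f w + g w)
  (fun k u v => ltac:(by rewrite /= !lmap_lin scalerDr addrACA)).
Definition lmap_opp (f : E) : E := @LinearMap (fun w => - f w)
  (fun k u v => ltac:(by rewrite /= lmap_lin opprD scalerN)).
Definition lmap_comp (f g : E) : E := @LinearMap (fun w => f (g w))
  (fun k u v => ltac:(by rewrite /= !lmap_lin)).
Definition lmap_id : E := @LinearMap (fun w => w) (fun k u v => erefl).
Definition lmap_scale (k : F) (f : E) : E := @LinearMap (fun w => k *: f w)
  (fun k' u v => ltac:(by rewrite /= lmap_lin scalerDr !scalerA mulrC)).

HB.instance Definition _ := gen_eqMixin E.
HB.instance Definition _ := gen_choiceMixin E.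

Lemma lmap_addA : associative lmap_add.
Proof. by move=> f g h; apply: lmap_ext => w /=; rewrite addrA. Qed.
Lemma lmap_addC : commutative lmap_add.
Proof. by move=> f g; apply: lmap_ext => w /=; rewrite addrC. Qed.
Lemma lmap_add0 : left_id lmap_zero lmap_add.
Proof. by move=> f; apply: lmap_ext => w /=; rewrite add0r. Qed.
Lemma lmap_addN : left_inverse lmap_zero lmap_opp lmap_add.
Proof. by move=> f; apply: lmap_ext => w /=; rewrite addNr. Qed.
HB.instance Definition _ :=
  GRing.isZmodule.Build E lmap_addA lmap_addC lmap_add0 lmap_addN.

Lemma lmap_compA : associative lmap_comp.
Proof. by move=> f g h; apply: lmap_ext. Qed.
Lemma lmap_comp1 : left_id lmap_id lmap_comp.
Proof. by move=> f; apply: lmap_ext. Qed.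
Lemma lmap_compr1 : right_id lmap_id lmap_comp.
Proof. by move=> f; apply: lmap_ext. Qed.
Lemma lmap_compDl : left_distributive lmap_comp +%R.
Proof. by move=> f g h; apply: lmap_ext. Qed.
Lemma lmap_compDr : right_distributive lmap_comp +%R.
Proof. by move=> f g h; apply: lmap_ext => w /=; rewrite lmapD. Qed.
Lemma lmap_id_neq0 : lmap_id != 0.
Proof. by apply: contra w0_neq0 => /eqP E0; have /= -> := congr1 (fun f : E => f w0) E0. Qed.
HB.instance Definition _ := GRing.Zmodule_isNzRing.Build E
  lmap_compA lmap_comp1 lmap_compr1 lmap_compDl lmap_compDr lmap_id_neq0.

Lemma lmap_scaleA a b (f : E) : lmap_scale a (lmap_scale b f) = lmap_scale (a * b) f.
Proof. by apply: lmap_ext => w /=; rewrite scalerA. Qed.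
Lemma lmap_scale1 : left_id 1 lmap_scale.
Proof. by move=> f; apply: lmap_ext => w /=; rewrite scale1r. Qed.
Lemma lmap_scaleDr : right_distributive lmap_scale +%R.
Proof. by move=> a f g; apply: lmap_ext => w /=; rewrite scalerDr. Qed.
Lemma lmap_scaleDl (f : E) : {morph lmap_scale^~ f : a b / a + b}.
Proof. by move=> a b; apply: lmap_ext => w /=; rewrite scalerDl. Qed.
HB.instance Definition _ := GRing.Zmodule_isLmodule.Build F E
  lmap_scaleA lmap_scale1 lmap_scaleDr lmap_scaleDl.

Lemma lmap_scaleAl (a : F) (f g : E) : a *: (f * g) = (a *: f) * g.
Proof. by apply: lmap_ext. Qed.
HB.instance Definition _ := GRing.Lmodule_isLalgebra.Build F E lmap_scaleAl.
Lemma lmap_scaleAr (a : F) (f g : E) : a *: (f * g) = f * (a *: g).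
Proof. by apply: lmap_ext => w /=; rewrite lmapZ. Qed.
HB.instance Definition _ := GRing.Lalgebra_isAlgebra.Build F E lmap_scaleAr.

Lemma End_mulE (f g : E) w : (f * g) w = f (g w). Proof. by []. Qed.
Lemma End_addE (f g : E) w : (f + g) w = f w + g w. Proof. by []. Qed.
Lemma End_oppE (f : E) w : (- f) w = - f w. Proof. by []. Qed.
Lemma End_scaleE k (f : E) w : (k *: f) w = k *: f w. Proof. by []. Qed.
Lemma End_oneE w : (1 : E) w = w. Proof. by []. Qed.

Lemma End_sumE n (G : 'I_n -> E) w : (\sum_(j < n) G j) w = \sum_(j < n) G j w.
Proof.
elim: n G => [|n IH] G; first by rewrite !big_ord0.
by rewrite !big_ord_recr /= IH.
Qed.

End LinearEndomorphisms.

(* A faithful model of A_h: the space F[x][y] = {poly {poly F}} of polynomials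
   in y with coefficients in F[x], on which X acts as multiplication by x and
   Y as the differential operator q |-> y q + h(x) dq/dx. *)
Section Model.
Variables (F : fieldType) (h : {poly F}).

Definition bipoly := {poly {poly F}}.
HB.instance Definition _ := GRing.Zmodule.on bipoly.

Definition bipoly_scale (k : F) (q : bipoly) : bipoly := (k%:P)%:P * (q : {poly {poly F}}).
Lemma bipoly_scaleA a b (v : bipoly) :
  bipoly_scale a (bipoly_scale b v) = bipoly_scale (a * b) v.
Proof. by rewrite /bipoly_scale mulrA -!polyCM. Qed.
Lemma bipoly_scale1 : left_id 1 bipoly_scale.
Proof. by move=> v; rewrite /bipoly_scale mul1r. Qed.
Lemma bipoly_scaleDr : right_distributive bipoly_scale +%R.
Proof. by move=> a u v; rewrite /bipoly_scale mulrDr. Qed.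
Lemma bipoly_scaleDl (v : bipoly) : {morph bipoly_scale^~ v : a b / a + b}.
Proof. by move=> a b; rewrite /bipoly_scale !polyCD mulrDl. Qed.
HB.instance Definition _ := GRing.Zmodule_isLmodule.Build F bipoly
  bipoly_scaleA bipoly_scale1 bipoly_scaleDr bipoly_scaleDl.
Lemma bipoly_scaleE k (v : bipoly) : k *: v = (k%:P)%:P * (v : {poly {poly F}}).
Proof. by []. Qed.

Lemma size_bipoly_scale k (u : bipoly) : (size (k *: u) <= size u)%N.
Proof. exact: size_Cmul_leq. Qed.

Definition derx (q : {poly {poly F}}) : {poly {poly F}} := map_poly deriv q.
Lemma coef_derx q i : (derx q)`_i = (q`_i)^`().
Proof. by rewrite /derx coef_map. Qed.
Lemma size_derx q : (size (derx q) <= size q)%N.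
Proof. by apply/leq_sizeP => j Hj; rewrite coef_derx nth_default ?deriv0. Qed.

Definition mulx (q : bipoly) : bipoly := 'X%:P * (q : {poly {poly F}}).
Definition dery (q : bipoly) : bipoly := 'X * (q : {poly {poly F}}) + h%:P * derx q.

Lemma derx_mulx q : derx (mulx q) = q + mulx (derx q).
Proof.
apply/polyP => i; rewrite /mulx coefD !coefCM !coef_derx coefCM.
by rewrite derivM derivX mul1r mulrC.
Qed.

Lemma mulx_lin : is_linear_map mulx.
Proof. by move=> k u v; rewrite /mulx !bipoly_scaleE; ring. Qed.
Lemma dery_lin : is_linear_map dery.
Proof.
have derxD p q : derx (p + q) = derx p + derx q.
  by apply/polyP => i; rewrite coefD !coef_derx coefD derivD.
have derxC c q : derx (c%:P%:P * q) = c%:P%:P * derx q.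
  by apply/polyP => i; rewrite coefCM !coef_derx coefCM deriv_mulC.
by move=> k u v; rewrite /dery !bipoly_scaleE derxD derxC; ring.
Qed.

Lemma bipoly1_neq0 : (1 : bipoly) != 0. Proof. exact: oner_neq0. Qed.
Definition End_bipoly := End_alg bipoly1_neq0.
Definition mulxE : End_bipoly := LinearMap mulx_lin.
Definition deryE : End_bipoly := LinearMap dery_lin.

Lemma polA_mulxE p (q : bipoly) : (polA p mulxE) q = p%:P * (q : {poly {poly F}}).
Proof.
elim/poly_ind: p q => [|p c IH] q; first by rewrite polA0 mul0r.
rewrite polAD polAM polAX polAC End_addE End_mulE IH End_scaleE End_oneE bipoly_scaleE.
by rewrite /= /mulx polyCD polyCM mulrDl mulrA.
Qed.

Lemma model_rel : deryE * mulxE - mulxE * deryE = polA h mulxE.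
Proof.
apply: lmap_ext => q; rewrite polA_mulxE End_addE End_oppE !End_mulE /=.
by rewrite /dery derx_mulx /mulx /=; ring.
Qed.

Lemma deryE_pow1 j : (deryE ^+ j : End_bipoly) 1 = 'X^j.
Proof.
elim: j => [|j IH]; first by rewrite expr0 End_oneE expr0.
rewrite exprS End_mulE IH /= /dery.
have -> : derx 'X^j = 0.
  apply/polyP => i; rewrite coef_derx coefXn coef0.
  by case: eqP => _; rewrite /= ?deriv0 // -polyC1 derivC.
by rewrite mulr0 addr0 exprS.
Qed.

Lemma size_dery (q : bipoly) : q != 0 ->
  size (dery q) = (size q).+1 /\ lead_coef (dery q) = lead_coef q.
Proof.
move=> q0; rewrite /dery.
have E1 : size ('X * (q : {poly {poly F}})) = (size q).+1 by rewrite mulrC size_mulX.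
have E2 : (size (h%:P * derx q)%R < size ('X * (q : {poly {poly F}}))%R)%N.
  rewrite E1 ltnS (leq_trans (size_mul_leq _ _)) // size_polyC.
  by case: (h != 0); rewrite ?add0n ?add1n ?size_derx // (leq_trans (leq_pred _) (size_derx _)).
by rewrite size_polyDl // lead_coefDl // E1 mulrC lead_coefMX.
Qed.

Lemma size_dery_pow (q : bipoly) j : q != 0 ->
  size ((deryE ^+ j : End_bipoly) q) = (size q + j)%N /\
  lead_coef ((deryE ^+ j : End_bipoly) q) = lead_coef q.
Proof.
move=> q0; elim: j => [|j [IH1 IH2]]; first by rewrite expr0 End_oneE addn0.
have n0 : (deryE ^+ j : End_bipoly) q != 0.
  by rewrite -size_poly_eq0 IH1 addn_eq0 size_poly_eq0 (negbTE q0).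
rewrite exprS End_mulE /=; have [S L] := size_dery n0.
by rewrite S L IH1 IH2 addnS.
Qed.

End Model.

Section AffineParameters.
Variables (F : fieldType) (h : {poly F}).
Hypothesis hdeg : (1 <= degp h)%N.
Local Notation d := (degp h).

Lemma size_affine (a b : F) : a != 0 -> size (a *: 'X + b%:P) = 2.
Proof.
move=> a0; rewrite size_polyDl size_scale // ?size_polyX //.
by rewrite (leq_ltn_trans (size_polyC_leq1 b)).
Qed.

Lemma h_neq0 : h != 0.
Proof. by rewrite -size_poly_eq0; move: hdeg; rewrite /degp; case: (size h). Qed.

Lemma size_h : size h = d.+1.
Proof. by rewrite /degp prednK // size_poly_gt0 h_neq0. Qed.

Lemma inP10 : inP h 1 0.
Proof.
split; first exact: oner_neq0.
by rewrite scale1r addr0 comp_polyXr expr1n scale1r.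
Qed.

(* (a, b) then (a', b') : the substitution x |-> a' (a x + b) + b'. *)
Lemma inP_comp a b a' b' : inP h a b -> inP h a' b' -> inP h (a * a') (a' * b + b').
Proof.
move=> [a0 E] [a0' E']; split; first by rewrite mulf_neq0.
have -> : (a * a') *: 'X + (a' * b + b')%:P = (a' *: 'X + b'%:P) \Po (a *: 'X + b%:P).
  rewrite comp_polyD comp_polyZ comp_polyX comp_polyC -!mul_polyC !polyCD !polyCM; ring.
by rewrite comp_polyA E' comp_polyZ E scalerA exprMn mulrC.
Qed.

Lemma inP_inv a b : inP h a b -> inP h a^-1 (- (a^-1 * b)).
Proof.
move=> [a0 E]; split; first by rewrite invr_eq0.
set q := a^-1 *: 'X + (- (a^-1 * b))%:P.
have Eq : (a *: 'X + b%:P) \Po q = 'X.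
  rewrite comp_polyD comp_polyZ comp_polyX comp_polyC /q scalerDr scalerA mulfV // scale1r.
  by rewrite -mul_polyC -polyCM mulrN mulrA mulfV // mul1r polyCN addrNK.
have Eh : h = a ^+ d *: (h \Po q) by rewrite -comp_polyZ -E -comp_polyA Eq comp_polyXr.
apply: (scalerI (expf_neq0 d a0)).
by rewrite -Eh scalerA -exprMn mulfV // expr1n scale1r.
Qed.

Lemma comp_rescaling (g : {poly F}) (l : F) : l != 0 -> h \Po g = l *: h ->
  inP h g`_1 g`_0 /\ g = g`_1 *: 'X + (g`_0)%:P.
Proof.
move=> l0 Ehg.
have Sg : size g = 2.
  have := size_comp_poly h g; rewrite Ehg size_scale // size_h /=.
  have := hdeg; case: (size g) => [|[|[|n]]] //= ? E; nia.
have g1 : g`_1 != 0.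
  by have := lead_coefE g; rewrite Sg /= => <-; rewrite lead_coef_eq0 -size_poly_eq0 Sg.
have Eg : g = g`_1 *: 'X + (g`_0)%:P.
  apply/polyP => i; rewrite coefD coefZ coefX coefC.
  case: i => [|[|i]] /=; rewrite ?mulr0 ?mulr1 ?add0r ?addr0 //.
  by rewrite nth_default // Sg.
have El : l = g`_1 ^+ d.
  have := lead_coef_comp h (_ : 1 < size g)%N; rewrite Ehg Sg lead_coefZ size_h /=.
  rewrite [lead_coef g]lead_coefE Sg /= => /(_ isT) E.
  by apply: (mulIf (_ : lead_coef h != 0)); rewrite ?lead_coef_eq0 ?h_neq0 // E mulrC.
by split => //; split => //; rewrite -Eg Ehg El.
Qed.

End AffineParameters.

Section Presentation.
Variables (F : fieldType) (h : {poly F}) (A : algType F) (X Y : A).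
Hypothesis hA : is_Ah h X Y.
Hypothesis hdeg : (1 <= degp h)%N.
Local Notation H := (polA h X).
Local Notation d := (degp h).

Lemma relA : Y * X - X * Y = H.
Proof. exact: hA.1. Qed.

Lemma YX : Y * X = X * Y + H.
Proof. by rewrite -relA addrC subrK. Qed.

Lemma rel_hom (B : algType F) (g : A -> B) : alg_hom g ->
  g Y * g X - g X * g Y = polA h (g X).
Proof. by move=> hg; rewrite -!(homM hg) -(homB hg) relA (hom_polA hg). Qed.

Lemma hom_uniq (B : algType F) (g1 g2 : A -> B) : alg_hom g1 -> alg_hom g2 ->
  g1 X = g2 X -> g1 Y = g2 Y -> g1 = g2.
Proof.
move=> h1 h2 EX EY; apply: functional_extensionality => x.
by apply: ((hA.2 B _ _ (rel_hom h1)).2).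
Qed.

Lemma hom_exists (B : algType F) (a b : B) : b * a - a * b = polA h a ->
  exists g : A -> B, alg_hom g /\ g X = a /\ g Y = b.
Proof. by move=> r; exact: (hA.2 B a b r).1. Qed.

(* phi_f, tau_{a,b} and the representation rho below are all chosen (by
   Hilbert's epsilon) among the morphisms with prescribed images of X, Y. *)
Lemma chosen_hom_spec (B : algType F) (i : inhabited (A -> B)) (a b : B) :
  b * a - a * b = polA h a ->
  let g := epsilon i (fun g => alg_hom g /\ g X = a /\ g Y = b) in
  alg_hom g /\ g X = a /\ g Y = b.
Proof. by move=> r; exact: (epsilon_spec i _ (hom_exists r)). Qed.

Lemma phi_spec f : alg_hom (phi X Y f) /\ phi X Y f X = X /\ phi X Y f Y = Y + polA f X.
Proof.
apply: (chosen_hom_spec (inhabits id)).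
by rewrite mulrDl mulrDr opprD addrACA relA polA_comm subrr addr0.
Qed.

(* The defining property of tau_{a,b}, for (a, b) in P: the relation for the
   images follows from h(aX + b) = a^d h(X). *)
Lemma tau_spec a b : inP h a b -> alg_hom (tau h X Y a b) /\
  tau h X Y a b X = a *: X + b%:A /\ tau h X Y a b Y = a ^+ d.-1 *: Y.
Proof.
move=> [a0 hab]; apply: (chosen_hom_spec (inhabits id)).
have -> : a *: X + b%:A = polA (a *: 'X + b%:P) X by rewrite polAD polAZ polAX polAC.
rewrite -polA_comp hab polAZ polAD polAZ polAX polAC -relA.
rewrite mulrDr mulrDl mulr_algr mulr_algl -!scalerAr -!scalerAl !scalerA.
rewrite [a * _]mulrC -exprSr prednK // [b * _]mulrC.
by rewrite opprD addrACA subrr addr0 scalerBr.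
Qed.

Definition rho : A -> End_bipoly F := epsilon (inhabits (fun _ => 0))
  (fun g => alg_hom g /\ g X = mulxE F /\ g Y = deryE h).

Lemma rho_spec : alg_hom rho /\ rho X = mulxE F /\ rho Y = deryE h.
Proof.
exact: (chosen_hom_spec _ (model_rel h)).
Qed.
Lemma rho_hom : alg_hom rho. Proof. exact: rho_spec.1. Qed.
Lemma rhoX : rho X = mulxE F. Proof. exact: rho_spec.2.1. Qed.
Lemma rhoY : rho Y = deryE h. Proof. exact: rho_spec.2.2. Qed.

Lemma Y_polA f : Y * polA f X = polA f X * Y + polA (h * f^`()) X.
Proof.
elim/poly_ind: f => [|f c IH]; first by rewrite deriv0 mulr0 !polA0 mulr0 mul0r addr0.
rewrite derivMXaddC mulrDr mulrA !polAD !polAM polAX polAC.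
rewrite mulrDr mulrA IH mulrDl -mulrA YX mulrDr.
rewrite polAM mulr_algr mulrDl mulr_algl (polA_comm2 h f X) !mulrA.
by rewrite -!addrA; congr (_ + _); rewrite addrA addrC.
Qed.

Definition from_coords (p : bipoly F) : A := \sum_(j < size p) polA p`_j X * Y ^+ j.

Lemma from_coords_wide n (p : bipoly F) : (size p <= n)%N ->
  from_coords p = \sum_(j < n) polA p`_j X * Y ^+ j.
Proof.
move=> Hn; rewrite /from_coords (big_ord_widen n (fun j => polA p`_j X * Y ^+ j)) //.
rewrite big_mkcond; apply: eq_bigr => i _; case: ltnP => // le.
by rewrite nth_default // polA0 mul0r.
Qed.

Lemma from_coords_lin k u v :
  from_coords (k *: u + v) = k *: from_coords u + from_coords v.
Proof.
pose n := maxn (size u) (size v).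
have Hu : (size u <= n)%N by rewrite leq_maxl.
have Hv : (size v <= n)%N by rewrite leq_maxr.
have Hs : (size (k *: u + v)%R <= n)%N.
  by rewrite (leq_trans (size_polyD _ _)) // geq_max (leq_trans (size_bipoly_scale _ _)).
rewrite !(from_coords_wide Hu, from_coords_wide Hv, from_coords_wide Hs).
rewrite scaler_sumr -big_split; apply: eq_bigr => j _.
by rewrite coefD bipoly_scaleE coefCM polAD polAM polAC mulr_algl mulrDl scalerAl.
Qed.

Lemma from_coords1 : from_coords 1 = 1.
Proof. by rewrite /from_coords size_poly1 big_ord1 expr0 mulr1 coefC /= polA1. Qed.

Lemma from_coords_mulx p : from_coords (mulx p) = X * from_coords p.
Proof.
have Hs : (size (mulx p) <= size p)%N.
  by apply/leq_sizeP => j Hj; rewrite /mulx coefCM nth_default ?mulr0.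
rewrite (from_coords_wide Hs) /from_coords mulr_sumr; apply: eq_bigr => j _.
by rewrite /mulx coefCM polAM polAX mulrA.
Qed.

Lemma from_coords_dery p : from_coords (dery h p) = Y * from_coords p.
Proof.
have Hs : (size (dery h p) <= (size p).+1)%N.
  apply/leq_sizeP => j Hj; rewrite /dery coefD coefXM coefCM coef_derx.
  case: j Hj => // j Hj; rewrite !nth_default ?deriv0 ?mulr0 ?addr0 //.
  exact: leqW.
rewrite (from_coords_wide Hs) /from_coords mulr_sumr.
under eq_bigr => j _ do rewrite /dery coefD coefXM coefCM coef_derx polAD mulrDl.
rewrite big_split /= big_ord_recl /= polA0 mul0r add0r big_ord_recr /= nth_default //.
rewrite deriv0 mulr0 polA0 mul0r addr0 -big_split /=; apply: eq_bigr => j _.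
by rewrite mulrA Y_polA mulrDl -mulrA -exprS addrC.
Qed.

(* A_h acts on A x F[x][y] by
   a.(u, q) = (a u, rho(a) q); conjugating this action by the shear
   (u, q) |-> (u + from_coords q, q) gives a second morphism agreeing with the
   first on X and Y (because from_coords intertwines), hence everywhere.
   Comparing the two actions on (0, q) shows from_coords (rho a q) = a from_coords q. *)
Definition pair_space := (A * bipoly F)%type.
Lemma pair_space_neq0 : ((0, 1) : pair_space) != 0.
Proof. by rewrite xpair_eqE negb_and oner_neq0 orbT. Qed.
Local Notation End_pair := (End_alg pair_space_neq0).

Lemma diag_action_lin (a : A) : is_linear_map (fun w : pair_space => (a * w.1, rho a w.2)).
Proof.
move=> k [u1 u2] [v1 v2] /=; congr (_, _); first by rewrite mulrDr -scalerAr.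
exact: lmap_lin.
Qed.
Definition diag_action (a : A) : End_pair := LinearMap (diag_action_lin a).

Lemma shear_lin (c : F) :
  is_linear_map (fun w : pair_space => (w.1 + c *: from_coords w.2, w.2)).
Proof.
move=> k [u1 u2] [v1 v2] /=; congr (_, _).
by rewrite from_coords_lin scalerDr !scalerA [c * k]mulrC -scalerA addrACA -scalerDr.
Qed.
Definition shear (c : F) : End_pair := LinearMap (shear_lin c).

Lemma shearK : shear (- 1) * shear 1 = 1.
Proof. by apply: lmap_ext => -[u v]; rewrite End_mulE /= scaleN1r scale1r addrK. Qed.
Lemma shearKV : shear 1 * shear (- 1) = 1.
Proof. by apply: lmap_ext => -[u v]; rewrite End_mulE /= scaleN1r scale1r subrK. Qed.

Lemma diag_action_hom : alg_hom diag_action.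
Proof.
split; [|split].
- move=> k u v; apply: lmap_ext => -[w1 w2] /=; congr (_, _).
    by rewrite mulrDl -scalerAl.
  by rewrite rho_hom.1.
- by apply: lmap_ext => -[w1 w2] /=; rewrite mul1r (hom1 rho_hom).
- by move=> u v; apply: lmap_ext => -[w1 w2] /=; rewrite mulrA (homM rho_hom).
Qed.

Definition sheared_action (a : A) : End_pair := shear (- 1) * diag_action a * shear 1.

Lemma sheared_action_hom : alg_hom sheared_action.
Proof.
split; [|split].
- move=> k u v; rewrite /sheared_action diag_action_hom.1 mulrDr mulrDl.
  by rewrite -scalerAr -scalerAl.
- by rewrite /sheared_action (hom1 diag_action_hom) mulr1 shearK.
- move=> u v; rewrite /sheared_action (homM diag_action_hom) -!mulrA.
  by congr (_ * (_ * _)); rewrite [RHS]mulrA shearKV mul1r.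
Qed.

Lemma from_coords_rho a q : from_coords (rho a q) = a * from_coords q.
Proof.
have shearing (u : A) (rhou : End_bipoly F) :
    (forall p, from_coords (rhou p) = u * from_coords p) -> rho u = rhou ->
    sheared_action u = diag_action u.
  move=> intertwine rhoE; apply: lmap_ext => -[w1 w2].
  rewrite /sheared_action !End_mulE /= scaleN1r scale1r.
  by rewrite rhoE intertwine mulrDr addrK.
have E : sheared_action = diag_action.
  apply: hom_uniq sheared_action_hom diag_action_hom _ _.
    by apply: shearing rhoX => p; rewrite from_coords_mulx.
  by apply: shearing rhoY => p; rewrite from_coords_dery.
have := congr1 (fun g => (g a : End_pair) (0, q)) E.
rewrite /sheared_action !End_mulE /= scaleN1r scale1r mulr0 add0r => -[] /eqP.
by rewrite subr_eq0 => /eqP.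
Qed.

Definition coords (a : A) : bipoly F := rho a 1.

Lemma from_coordsK a : from_coords (coords a) = a.
Proof. by rewrite from_coords_rho from_coords1 mulr1. Qed.

Lemma coords_inj : injective coords.
Proof. by move=> u v E; rewrite -(from_coordsK u) -(from_coordsK v) E. Qed.

Lemma coordsD u v : coords (u + v) = coords u + coords v.
Proof. by rewrite /coords (homD rho_hom). Qed.
Lemma coords0 : coords 0 = 0.
Proof. by rewrite /coords (hom0 rho_hom). Qed.
Lemma coordsZ k u : coords (k *: u) = k *: coords u.
Proof. by rewrite /coords (homZ rho_hom). Qed.
Lemma coordsM u v : coords (u * v) = rho u (coords v).
Proof. by rewrite /coords (homM rho_hom). Qed.
Lemma coords_eq0 u : (coords u == 0) = (u == 0).
Proof. by apply/eqP/eqP => [E|->]; [apply: coords_inj; rewrite E coords0 | exact: coords0]. Qed.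
Lemma coords_sum n (G : 'I_n -> A) : coords (\sum_(i < n) G i) = \sum_(i < n) coords (G i).
Proof.
elim: n G => [|n IH] G; first by rewrite !big_ord0 coords0.
by rewrite !big_ord_recr /= coordsD IH.
Qed.

Lemma rho_polA f q : rho (polA f X) q = f%:P * (q : {poly {poly F}}).
Proof. by rewrite (hom_polA rho_hom) rhoX polA_mulxE. Qed.

Lemma coords_polA f : coords (polA f X) = f%:P.
Proof. by rewrite /coords rho_polA mulr1. Qed.
Lemma coordsY : coords Y = 'X.
Proof. by rewrite /coords rhoY -[deryE h]expr1 deryE_pow1 expr1. Qed.
Lemma coords1 : coords 1 = 1.
Proof. by rewrite -(polA1 X) coords_polA. Qed.

Lemma coords_polAM q u : coords (polA q X * u) = q%:P * (coords u : {poly {poly F}}).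
Proof. by rewrite coordsM rho_polA. Qed.

Lemma polA_inj f g : polA f X = polA g X -> f = g.
Proof. by move=> E; apply/polyC_inj; rewrite -!coords_polA E. Qed.

Lemma coords_small u : (size (coords u) <= 1)%N -> u = polA (coords u)`_0 X.
Proof. by move=> /size1_polyC E; apply: coords_inj; rewrite coords_polA -E. Qed.

Lemma rho_from_coords p q : rho (from_coords p) q =
  \sum_(j < size p) (p`_j)%:P * ((deryE h ^+ j : End_bipoly F) q : {poly {poly F}}).
Proof.
rewrite /from_coords (hom_sum rho_hom) End_sumE; apply: eq_bigr => j _.
by rewrite (homM rho_hom) End_mulE rho_polA (homX rho_hom) rhoY.
Qed.

(* The y-degree is additive: coordinates multiply like polynomials in y at
   the level of size and leading coefficient (the leading term of Y^j q is
   y^j times that of q). *)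
Lemma size_rho_from_coords (p q : bipoly F) : p != 0 -> q != 0 ->
  size (rho (from_coords p) q) = (size p + size q).-1 /\
  lead_coef (rho (from_coords p) q) = lead_coef p * lead_coef q.
Proof.
move=> p0 q0; rewrite rho_from_coords.
have [n Hn] : exists n, size p = n.+1.
  by exists (size p).-1; rewrite prednK // lt0n size_poly_eq0.
have lp : p`_n != 0 by rewrite -[n]/(n.+1.-1) -Hn -lead_coefE lead_coef_eq0.
pose r j := (p`_j)%:P * ((deryE h ^+ j : End_bipoly F) q : {poly {poly F}}).
have size_rn : size (r n) = (size q + n)%N.
  by rewrite /r size_Cmul // (size_dery_pow h n q0).1.
have dominant j : (j < n)%N -> (size (r j) < size (r n))%N.
  move=> ltjn; rewrite size_rn (leq_ltn_trans (size_Cmul_leq _ _)) //.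
  by rewrite (size_dery_pow h j q0).1 ltn_add2l.
have rn0 : r n != 0 by rewrite -size_poly_eq0 size_rn addn_eq0 size_poly_eq0 (negbTE q0).
rewrite Hn; move: (size_sum_dominant rn0 dominant) size_rn; rewrite /r => -[-> ->] ->.
rewrite lead_coefM lead_coefC (size_dery_pow h n q0).2 [lead_coef p]lead_coefE Hn.
by rewrite addSn addnC.
Qed.

Lemma size_coordsM u v : u != 0 -> v != 0 ->
  size (coords (u * v)) = (size (coords u) + size (coords v)).-1 /\
  lead_coef (coords (u * v)) = lead_coef (coords u) * lead_coef (coords v).
Proof.
move=> u0 v0; rewrite coordsM.
by have := @size_rho_from_coords (coords u) (coords v); rewrite from_coordsK !coords_eq0; apply.
Qed.

Lemma mulA_eq0 (u v : A) : u * v = 0 -> u = 0 \/ v = 0.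
Proof.
move=> E; case: (eqVneq u 0) => [|u0]; first by left.
case: (eqVneq v 0) => [|v0]; first by right.
have [S _] := size_coordsM u0 v0.
have : (0 < size (coords u))%N by rewrite size_poly_gt0 coords_eq0.
have : (0 < size (coords v))%N by rewrite size_poly_gt0 coords_eq0.
by rewrite E coords0 size_poly0 in S; lia.
Qed.

Lemma mulAI (u v w : A) : u != 0 -> u * v = u * w -> v = w.
Proof.
move=> u0 E; have : u * (v - w) = 0 by rewrite mulrBr E subrr.
by case/mulA_eq0 => [/eqP|/eqP]; rewrite ?(negbTE u0) // subr_eq0 => /eqP.
Qed.

Lemma gen_ind (P : A -> Prop) :
  (forall f, P (polA f X)) -> P Y -> (forall u v, P u -> P v -> P (u + v)) ->
  (forall u v, P u -> P v -> P (u * v)) -> forall u, P u.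
Proof.
move=> Ppol PY PD PM u; rewrite -(from_coordsK u) /from_coords.
apply: (big_ind P); [by rewrite -(polA0 X) | exact: PD |] => j _.
apply: (PM) => //; elim: (nat_of_ord j) => [|k IH]; first by rewrite expr0 -(polA1 X).
by rewrite exprS; apply: (PM).
Qed.

Lemma H_normal (u : A) : exists u', u * H = H * u'.
Proof.
elim/gen_ind: u.
- by move=> f; exists (polA f X); rewrite polA_comm2.
- exists (Y + polA h^`() X); rewrite Y_polA mulrDr -polAM.
  by congr (_ + _); rewrite polA_comm2.
- by move=> u v [u' Eu] [v' Ev]; exists (u' + v'); rewrite mulrDl mulrDr Eu Ev.
- by move=> u v [u' Eu] [v' Ev]; exists (u' * v'); rewrite -mulrA Ev mulrA Eu mulrA.
Qed.

Lemma commutator_gen (u : A) :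
  (forall f, exists r, u * polA f X - polA f X * u = H * r) ->
  (exists r, u * Y - Y * u = H * r) -> forall v, exists r, u * v - v * u = H * r.
Proof.
move=> Hf HY; elim/gen_ind => //.
- by move=> v w [r1 E1] [r2 E2]; exists (r1 + r2);
  rewrite mulrDr mulrDl mulrDr opprD addrACA E1 E2.
- move=> v w [r1 E1] [r2 E2]; have [v' Ev] := H_normal v.
  exists (r1 * w + v' * r2).
  have -> : u * (v * w) - v * w * u = (u * v - v * u) * w + v * (u * w - w * u).
    by rewrite mulrBl mulrBr !mulrA addrA subrK.
  by rewrite E1 E2 mulrA Ev mulrDr !mulrA.
Qed.

Lemma commutator_ideal (u v : A) : exists r, u * v - v * u = H * r.
Proof.
move: u v; elim/gen_ind.
- move=> f; apply: commutator_gen.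
    by move=> g; exists 0; rewrite polA_comm2 subrr mulr0.
  exists (- polA f^`() X); rewrite Y_polA opprD addrA subrr add0r polAM mulrN.
  by [].
- apply: commutator_gen; last by exists 0; rewrite subrr mulr0.
  by move=> f; exists (polA f^`() X); rewrite Y_polA addrAC subrr add0r polAM.
- move=> u1 u2 I1 I2 v; have [r1 E1] := I1 v; have [r2 E2] := I2 v.
  by exists (r1 + r2); rewrite mulrDl mulrDr opprD addrACA E1 E2 mulrDr.
- move=> u1 u2 I1 I2 v; have [r1 E1] := I1 v; have [r2 E2] := I2 v.
  have [u1' Eu] := H_normal u1; exists (u1' * r2 + r1 * u2).
  have -> : u1 * u2 * v - v * (u1 * u2) = u1 * (u2 * v - v * u2) + (u1 * v - v * u1) * u2.
    by rewrite mulrBl mulrBr !mulrA addrA subrK.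
  by rewrite E1 E2 !mulrA Eu mulrDr !mulrA.
Qed.

Lemma H_neq0 : H != 0.
Proof. by rewrite -coords_eq0 coords_polA polyC_eq0 (h_neq0 hdeg). Qed.

Lemma size_coords_pow (u : A) k i : size (coords u) = k.+1 ->
  size (coords (u ^+ i)) = (1 + i * k)%N.
Proof.
move=> Su; have u0 : u != 0 by rewrite -coords_eq0 -size_poly_eq0 Su.
elim: i => [|i IH]; first by rewrite expr0 coords1 size_poly1.
have ui0 : u ^+ i != 0 by rewrite -coords_eq0 -size_poly_eq0 IH.
by rewrite exprS (size_coordsM u0 ui0).1 Su IH; lia.
Qed.

Lemma size_coords_polAM q (u : A) : (size (coords (polA q X * u)) <= size (coords u))%N.
Proof. by rewrite coords_polAM size_Cmul_leq. Qed.

Lemma size_coords_polA p (u : A) k : p != 0 -> (0 < k)%N -> size (coords u) = k.+1 ->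
  size (coords (polA p u)) = (1 + (size p).-1 * k)%N.
Proof.
move=> p0 k0 Su; rewrite polA_coef coords_sum.
have [n Hn] : exists n, size p = n.+1.
  by exists (size p).-1; rewrite prednK // size_poly_gt0.
have lp : p`_n != 0 by rewrite -[n]/(n.+1.-1) -Hn -lead_coefE lead_coef_eq0.
pose r j := coords (p`_j *: u ^+ j).
have size_rn : size (r n) = (1 + n * k)%N.
  by rewrite /r coordsZ bipoly_scaleE size_Cmul ?polyC_eq0 // (size_coords_pow n Su).
have dominant j : (j < n)%N -> (size (r j) < size (r n))%N.
  move=> ltjn; rewrite size_rn /r coordsZ (leq_ltn_trans (size_bipoly_scale _ _)) //.
  by rewrite (size_coords_pow j Su) ltn_add2l ltn_pmul2r.
have rn0 : r n != 0 by rewrite -size_poly_eq0 size_rn.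
by rewrite Hn; move: (size_sum_dominant rn0 dominant).1 size_rn; rewrite /r => -> ->.
Qed.

Lemma unit_scalar (r s : A) : r * s = 1 -> exists l : F, l != 0 /\ r = l%:A.
Proof.
move=> E.
have r0 : r != 0 by apply: contra_eq_neq E => ->; rewrite mul0r eq_sym oner_neq0.
have s0 : s != 0 by apply: contra_eq_neq E => ->; rewrite mulr0 eq_sym oner_neq0.
have [S _] := size_coordsM r0 s0; rewrite E coords1 size_poly1 in S.
have Pr : (0 < size (coords r))%N by rewrite size_poly_gt0 coords_eq0.
have Ps : (0 < size (coords s))%N by rewrite size_poly_gt0 coords_eq0.
have Er := @coords_small r ltac:(lia); have Es := @coords_small s ltac:(lia).
set c := (coords r)`_0 in Er; set c' := (coords s)`_0 in Es.
have cc : c * c' = 1 by apply: polA_inj; rewrite polAM -Er -Es E polA1.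
have c_unit : c \is a GRing.unit by apply/unitrP; exists c'; rewrite mulrC cc.
have [Sc1 c0] : (size c <= 1)%N /\ c`_0 != 0.
  have := poly_unitE c; rewrite c_unit => /esym /andP[/eqP Sc].
  by rewrite unitfE => c00; split; [rewrite Sc | exact: c00].
by exists c`_0; split => //; rewrite Er {1}(size1_polyC Sc1) polAC.
Qed.

(* An automorphism maps H to a nonzero multiple of itself: it preserves the
   ideal H A_h generated by the commutators, and H is determined up to a
   unit, i.e. a scalar. *)
Lemma aut_rescales_H (w : A -> A) : alg_aut w ->
  exists l : F, l != 0 /\ polA h (w X) = l *: H.
Proof.
move=> aw; have hw := aw.1; have [w' [hw' [K1 K2]]] := aut_inv aw.
have [r Er] := commutator_ideal (w Y) (w X).
have [r' Er'] := commutator_ideal (w' Y) (w' X).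
have EH : H = polA h (w X) * w r'.
  by have := congr1 w Er'; rewrite (homB hw) !(homM hw) !K2 relA (hom_polA hw).
have r_unit : r * w r' = 1.
  apply: (mulAI H_neq0); rewrite mulr1 mulrA -Er.
  by rewrite (rel_hom hw) -EH.
have [l [l0 El]] := unit_scalar r_unit.
by exists l; split => //; rewrite -(rel_hom hw) Er El mulr_algr.
Qed.

(* An element whose image under h is a multiple of h(X) lies in F[X]: a
   positive y-degree k would give h(u) the y-degree d k. *)
Lemma rescales_H_polynomial (u : A) (l : F) : l != 0 -> polA h u = l *: H ->
  (size (coords u) <= 1)%N.
Proof.
move=> l0 Eu; rewrite leqNgt; apply/negP => Su.
have [k Ek] : exists k, size (coords u) = k.+1.
  by exists (size (coords u)).-1; rewrite prednK // (ltn_trans _ Su).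
have k0 : (0 < k)%N by move: Su; rewrite Ek.
have := size_coords_polA (h_neq0 hdeg) k0 Ek.
rewrite Eu coordsZ coords_polA bipoly_scaleE size_Cmul ?polyC_eq0 //.
by rewrite size_polyC (h_neq0 hdeg) (size_h hdeg) /=; nia.
Qed.

Lemma aut_X_affine (w : A -> A) : alg_aut w ->
  exists a b : F, inP h a b /\ w X = a *: X + b%:A.
Proof.
move=> aw; have [l [l0 El]] := aut_rescales_H aw.
have Ea := coords_small (rescales_H_polynomial l0 El).
set g := (coords (w X))`_0 in Ea.
have Ehg : h \Po g = l *: h by apply: polA_inj; rewrite polA_comp -Ea El polAZ.
have [inPg Eg] := comp_rescaling hdeg l0 Ehg.
exists g`_1, g`_0; split => //.
by rewrite Ea {1}Eg polAD polAZ polAX polAC.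
Qed.

(* If w X lies in F[X], then w Y has y-degree exactly 1: Y is a polynomial in
   w X and w Y, and a y-degree k of w Y yields y-degree n k for Y. *)
Lemma aut_Y_degree (w : A -> A) (g : {poly F}) : alg_aut w -> size g = 2 ->
  w X = polA g X -> size (coords (w Y)) = 2.
Proof.
move=> aw Sg Ea; have hw := aw.1; have [w' [_ [_ K2]]] := aut_inv aw.
set b := w Y; set p := coords (w' Y).
have p0 : p != 0.
  rewrite coords_eq0; apply: contra_eq_neq (K2 Y) => ->.
  by rewrite (hom0 hw) eq_sym -coords_eq0 coordsY polyX_eq0.
have EY : Y = \sum_(j < size p) polA (p`_j \Po g) X * b ^+ j.
  rewrite -{1}(K2 Y) -(from_coordsK (w' Y)) -/p /from_coords (hom_sum hw).
  by apply: eq_bigr => j _; rewrite (homM hw) (homX hw) (hom_polA hw) Ea -polA_comp.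
have [Sb|Sb] := leqP (size (coords b)) 1.
  have Eb := coords_small Sb; set cb := (coords b)`_0 in Eb.
  have : Y = polA (\sum_(j < size p) (p`_j \Po g) * cb ^+ j) X.
    by rewrite polA_sum {1}EY; apply: eq_bigr => j _; rewrite Eb polAM polAXn.
  move/(congr1 coords); rewrite coordsY coords_polA => E.
  by have := size_polyX {poly F}; rewrite E size_polyC; case: (_ != 0).
have [k Ek] : exists k, size (coords b) = k.+1.
  by exists (size (coords b)).-1; rewrite prednK // (ltn_trans _ Sb).
have k0 : (0 < k)%N by move: Sb; rewrite Ek.
have [n Hn] : exists n, size p = n.+1.
  by exists (size p).-1; rewrite prednK // size_poly_gt0.
have lp : p`_n != 0 by rewrite -[n]/(n.+1.-1) -Hn -lead_coefE lead_coef_eq0.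
pose r j := coords (polA (p`_j \Po g) X * b ^+ j).
have size_rn : size (r n) = (1 + n * k)%N.
  by rewrite /r coords_polAM size_Cmul ?polyC_eq0 ?comp_poly2_eq0 ?(size_coords_pow n Ek).
have dominant j : (j < n)%N -> (size (r j) < size (r n))%N.
  move=> ltjn; rewrite size_rn (leq_ltn_trans (size_coords_polAM _ _)) //.
  by rewrite (size_coords_pow j Ek) ltn_add2l ltn_pmul2r.
have rn0 : r n != 0 by rewrite -size_poly_eq0 size_rn.
have := congr1 (fun u => size (coords u)) EY; rewrite /= coordsY size_polyX coords_sum Hn.
move: (size_sum_dominant rn0 dominant).1 size_rn; rewrite /r => -> -> /esym /eqP.
by rewrite Ek -addn1 eqn_add2l muln_eq1 => /andP[_ /eqP ->].
Qed.

(* Part of the main theorem: given w X = aX + b, the y-degree-1 element w Y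
   is forced to be a^(d-1) Y + c(X) by the relation in the image. *)
Lemma aut_Y_form (w : A -> A) a b : alg_aut w -> inP h a b -> w X = a *: X + b%:A ->
  exists c : {poly F}, w Y = a ^+ d.-1 *: Y + polA c X.
Proof.
move=> aw [a0 hab] EX.
have EXpol : w X = polA (a *: 'X + b%:P) X by rewrite polAD polAZ polAX polAC.
set q := coords (w Y).
have Eb : w Y = polA q`_0 X + polA q`_1 X * Y.
  rewrite -{1}(from_coordsK (w Y)) -/q /from_coords (aut_Y_degree aw (size_affine b a0) EXpol).
  by rewrite !big_ord_recl big_ord0 addr0 /= expr0 mulr1 expr1.
have Ecomm : w Y * X - X * w Y = polA (q`_1 * h) X.
  rewrite Eb mulrDl mulrDr opprD addrACA -polA_comm subrr add0r polAM.
  by rewrite -mulrA YX mulrDr !mulrA -(polA_comm q`_1 X) addrAC subrr add0r.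
have Eq1 : q`_1 = (a ^+ d.-1)%:P.
  apply: (mulIf (h_neq0 hdeg)); rewrite mul_polyC; apply: (scalerI a0).
  apply: polA_inj; rewrite !polAZ -Ecomm scalerA -exprS prednK //.
  rewrite -polAZ -hab polA_comp -EXpol -(rel_hom aw.1) EX.
  rewrite mulrDr mulrDl mulr_algr mulr_algl -scalerAr -scalerAl opprD addrACA.
  by rewrite subrr addr0 scalerBr.
by exists q`_0; rewrite Eb Eq1 polAC mulr_algl addrC.
Qed.

Local Notation phi := (phi X Y).
Local Notation tau := (tau h X Y).

Lemma phi_hom f : alg_hom (phi f). Proof. exact: (phi_spec f).1. Qed.
Lemma phiX f : phi f X = X. Proof. exact: (phi_spec f).2.1. Qed.
Lemma phiY f : phi f Y = Y + polA f X. Proof. exact: (phi_spec f).2.2. Qed.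

Lemma phi_polA f g : phi f (polA g X) = polA g X.
Proof. by rewrite (hom_polA (phi_hom f)) phiX. Qed.

Lemma phi_add f g : phi (f + g) = phi f \o phi g.
Proof.
apply: (hom_uniq (phi_hom _) (hom_comp (phi_hom f) (phi_hom g))) => /=.
  by rewrite !phiX.
by rewrite !phiY (homD (phi_hom f)) phiY phi_polA polAD addrA.
Qed.

Lemma phi0 : phi 0 = id.
Proof.
apply: (hom_uniq (phi_hom _) (hom_id A)); first by rewrite phiX.
by rewrite phiY polA0 addr0.
Qed.

Lemma phi_aut f : alg_aut (phi f).
Proof.
split; first exact: phi_hom.
exists (phi (- f)) => u.
- by have := congr1 (fun g => g u) (phi_add (- f) f); rewrite addNr phi0.
- by have := congr1 (fun g => g u) (phi_add f (- f)); rewrite addrN phi0.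
Qed.

Lemma phi_inj f g : phi f = phi g -> f = g.
Proof. by move=> /(congr1 (fun k => k Y)); rewrite /= !phiY => /addrI /polA_inj. Qed.

Lemma tau_hom a b : inP h a b -> alg_hom (tau a b).
Proof. by move=> P; exact: (tau_spec P).1. Qed.
Lemma tauX a b : inP h a b -> tau a b X = a *: X + b%:A.
Proof. by move=> P; exact: (tau_spec P).2.1. Qed.
Lemma tauY a b : inP h a b -> tau a b Y = a ^+ d.-1 *: Y.
Proof. by move=> P; exact: (tau_spec P).2.2. Qed.

Lemma tau10 : tau 1 0 = id.
Proof.
apply: (hom_uniq (tau_hom (inP10 h)) (hom_id A)).
  by rewrite (tauX (inP10 h)) scale1r scale0r addr0.
by rewrite (tauY (inP10 h)) expr1n scale1r.
Qed.

Lemma tau_comp a b a' b' : inP h a b -> inP h a' b' ->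
  tau a b \o tau a' b' = tau (a * a') (a' * b + b').
Proof.
move=> P P'; have P'' := inP_comp P P'.
apply: (hom_uniq (hom_comp (tau_hom P) (tau_hom P')) (tau_hom P'')) => /=.
  rewrite !tauX // (homD (tau_hom P)) (homZ (tau_hom P)) (homA (tau_hom P)) tauX //.
  by rewrite scalerDr !scalerA [a' * a]mulrC scalerDl addrA.
by rewrite !tauY // (homZ (tau_hom P)) tauY // scalerA exprMn mulrC.
Qed.

Lemma tau_inv a b : inP h a b ->
  tau a b \o tau a^-1 (- (a^-1 * b)) = id /\ tau a^-1 (- (a^-1 * b)) \o tau a b = id.
Proof.
move=> P; have P' := inP_inv P; have a0 := P.1.
rewrite !tau_comp //; split.
- by rewrite mulfV // subrr tau10.
- by rewrite mulVf // mulrN mulrA mulfV // mul1r addNr tau10.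
Qed.

Lemma tau_aut a b : inP h a b -> alg_aut (tau a b).
Proof.
move=> P; split; first exact: tau_hom.
have [E1 E2] := tau_inv P.
by exists (tau a^-1 (- (a^-1 * b))) => u; [move: E2 | move: E1] => /(congr1 (fun g => g u)).
Qed.

Lemma tau_iter a b n : inP h a b -> inP h (a ^+ n) (b * \sum_(i < n) a ^+ i) /\
  iter n (tau a b) = tau (a ^+ n) (b * \sum_(i < n) a ^+ i).
Proof.
move=> P; elim: n => [|n [IP IE]].
  by rewrite big_ord0 mulr0 expr0 tau10; split => //; exact: inP10.
have Es : b * \sum_(i < n.+1) a ^+ i = a ^+ n * b + b * \sum_(i < n) a ^+ i.
  by rewrite big_ord_recr /= mulrDr addrC mulrC.
rewrite exprS Es; split; first exact: inP_comp.
by rewrite -tau_comp //; apply: functional_extensionality => u /=; rewrite IE.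
Qed.

(* Part (iii): a root of unity a != 1 of order dividing l gives tau^l = id,
   since then 1 + a + ... + a^(l-1) = 0. *)
Lemma tau_root_of_unity a b l : inP h a b -> a != 1 -> a ^+ l = 1 ->
  iter l (tau a b) = id.
Proof.
move=> P a1 al1; have [_ ->] := tau_iter l P.
have -> : \sum_(i < l) a ^+ i = 0.
  have := subrX1 a l; rewrite al1 subrr => /esym/eqP; rewrite mulf_eq0 subr_eq0.
  by rewrite (negbTE a1) => /eqP.
by rewrite mulr0 al1 tau10.
Qed.

Lemma aut_decomp (w : A -> A) : alg_aut w ->
  exists (a b : F) (f : {poly F}), inP h a b /\ w = phi f \o tau a b.
Proof.
move=> aw; have [a [b [P EX]]] := aut_X_affine aw.
have [c EY] := aut_Y_form aw P EX.
have ad0 : a ^+ d.-1 != 0 by rewrite expf_neq0 // P.1.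
exists a, b, ((a ^+ d.-1)^-1 *: c); split => //.
apply: (hom_uniq aw.1 (hom_comp (phi_hom _) (tau_hom P))) => /=.
  by rewrite (tauX P) (homD (phi_hom _)) (homZ (phi_hom _)) (homA (phi_hom _)) phiX.
by rewrite (tauY P) (homZ (phi_hom _)) phiY scalerDr polAZ scalerA mulfV // scale1r.
Qed.

Lemma phi_normal (w : A -> A) f : alg_aut w -> exists g, w \o phi f = phi g \o w.
Proof.
move=> aw; have [a [b [P EX]]] := aut_X_affine aw.
have [c EY] := aut_Y_form aw P EX.
have ad0 : a ^+ d.-1 != 0 by rewrite expf_neq0 // P.1.
exists ((a ^+ d.-1)^-1 *: (f \Po (a *: 'X + b%:P))).
apply: (hom_uniq (hom_comp aw.1 (phi_hom _)) (hom_comp (phi_hom _) aw.1)) => /=.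
  by rewrite phiX EX (homD (phi_hom _)) (homZ (phi_hom _)) (homA (phi_hom _)) phiX.
rewrite phiY (homD aw.1) (hom_polA aw.1) EY (homD (phi_hom _)) (homZ (phi_hom _)).
rewrite phiY phi_polA scalerDr polAZ scalerA mulfV // scale1r polA_comp EX.
by rewrite polAD polAZ polAX polAC -addrA [polA c X + _]addrC addrA.
Qed.

Lemma tau_phi_eq a b f : inP h a b -> tau a b = phi f -> a = 1 /\ b = 0 /\ f = 0.
Proof.
move=> P E.
have EX := congr1 (fun g => g X) E; rewrite /= (tauX P) phiX in EX.
have Ep : a *: 'X + b%:P = 'X :> {poly F}.
  by apply: polA_inj; rewrite polAD polAZ polAX polAC EX.
have a1 : a = 1.
  by have := congr1 (fun p : {poly F} => p`_1) Ep; rewrite /= coefD coefZ !coefX coefC mulr1 addr0.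
have b0 : b = 0.
  by have := congr1 (fun p : {poly F} => p`_0) Ep; rewrite /= coefD coefZ !coefX coefC mulr0 add0r.
do 2!split => //.
have EY := congr1 (fun g => g Y) E; rewrite /= (tauY P) phiY a1 expr1n scale1r in EY.
by apply: polA_inj; rewrite polA0; apply: (addrI Y); rewrite -EY addr0.
Qed.

End Presentation.
Theorem theorem8p3 (F : fieldType) (h : {poly F}) (hdeg : (1 <= degp h)%N)
  (A : algType F) (X Y : A) (hA : is_Ah h X Y) :
  (* (i) *)
  (forall w : A -> A, alg_aut w ->
     exists (alpha beta : F) (f : {poly F}),
       inP h alpha beta /\ w = phi X Y f \o tau h X Y alpha beta) /\
  (* (ii) *)
  (forall (alpha beta : F) (f : {poly F}), inP h alpha beta ->
     (tau h X Y alpha beta = phi X Y f <-> alpha = 1 /\ beta = 0 /\ f = 0)) /\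
  (* (iii) *)
  (forall (alpha beta : F) (l : nat), inP h alpha beta -> alpha != 1 ->
     (2 <= l)%N -> alpha ^+ l = 1 -> iter l (tau h X Y alpha beta) = id) /\
  (* (iv) {phi_f} is an abelian group isomorphic to (F[x], +) via f |-> phi_f,
     and a normal subgroup of Aut_F(A_h) *)
  ((forall f : {poly F}, alg_aut (phi X Y f)) /\
   (forall f g : {poly F}, phi X Y (f + g) = phi X Y f \o phi X Y g) /\
   phi X Y 0 = id /\
   (forall f g : {poly F}, phi X Y f = phi X Y g -> f = g) /\
   (forall w : A -> A, alg_aut w -> forall f : {poly F},
      exists g : {poly F}, w \o phi X Y f = phi X Y g \o w)) /\
  (* (v) tau_P is a subgroup and Aut = {phi_f} x| tau_P *)
  ((forall alpha beta : F, inP h alpha beta -> alg_aut (tau h X Y alpha beta)) /\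
   inP h 1 0 /\ tau h X Y 1 0 = id /\
   (forall a b a' b' : F, inP h a b -> inP h a' b' ->
      exists a'' b'' : F, inP h a'' b'' /\
        tau h X Y a b \o tau h X Y a' b' = tau h X Y a'' b'') /\
   (forall a b : F, inP h a b ->
      exists a' b' : F, inP h a' b' /\ tau h X Y a' b' \o tau h X Y a b = id) /\
   (forall (a b : F) (f : {poly F}), inP h a b ->
      tau h X Y a b = phi X Y f -> tau h X Y a b = id) /\
   (forall w : A -> A, alg_aut w ->
      exists (f : {poly F}) (a b : F), inP h a b /\
        w = phi X Y f \o tau h X Y a b)).
Proof.
have tau_id := tau10 hA hdeg.
split; first exact: aut_decomp.
split.
  move=> a b f P; split; first exact: tau_phi_eq.
  by move=> [-> [-> ->]]; rewrite tau_id (phi0 hA).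
split; first by move=> a b l P a1 _; exact: tau_root_of_unity.
split.
  split; first exact: (phi_aut hA).
  split; first exact: (phi_add hA).
  split; first exact: (phi0 hA).
  split; first exact: (phi_inj hA).
  by move=> w aw f; exact: (phi_normal hA hdeg f aw).
split; first exact: tau_aut.
split; first exact: inP10.
split; first exact: tau_id.
split.
  move=> a b a' b' P P'; exists (a * a'), (a' * b + b').
  by split; [exact: inP_comp | exact: tau_comp].
split.
  move=> a b P; exists a^-1, (- (a^-1 * b)).
  by split; [exact: inP_inv | exact: (tau_inv hA hdeg P).2].
split.
  by move=> a b f P /(tau_phi_eq hA hdeg P) [-> [-> _]].
by move=> w /(aut_decomp hA hdeg) [a [b [f [P E]]]]; exists f, a, b.
Qed.
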